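(* Let $\Bbbk$ be a field of characteristic $0$, $n\ge2$, and let $(A,\mu,\alpha)$ be a multiplicative $n$-ary totally Hom-associative algebra over $\Bbbk$. Then for each integer $k\ge0$, $A_k=(A,\alpha^{2^k-1}\circ\mu,\alpha^{2^k})$ (all twisting maps equal to $\alpha^{2^k}$) is a multiplicative $n$-ary totally Hom-associative algebra.
   Context: An $n$-ary Hom-algebra $(V,\mu,(\alpha_1,\ldots,\alpha_{n-1}))$ is a vector space $V$ with an $n$-linear map $\mu$ (written $\mu(a_1,\ldots,a_n)=(a_1\cdots a_n)$) and linear maps $\alpha_i\colon V\to V$. It is multiplicative if all $\alpha_i$ equal one map $\alpha$ and $\alpha\circ\mu=\mu\circ\alpha^{\otimes n}$; such a Hom-algebra is written $(V,\mu,\alpha)$. $\alpha^m$ denotes the $m$-fold composite, $\alpha^0=\mathrm{Id}$. It is $n$-ary totally Hom-associative if for every $i\in\{1,\ldots,n-1\}$ and all $a_1,\ldots,a_{2n-1}$: $(\alpha_1(a_1),\ldots,\alpha_{i-1}(a_{i-1}),(a_i\cdots a_{i+n-1}),\alpha_i(a_{i+n}),\ldots,\alpha_{n-1}(a_{2n-1}))=(\alpha_1(a_1),\ldots,\alpha_i(a_i),(a_{i+1}\cdots a_{i+n}),\alpha_{i+1}(a_{i+n+1}),\ldots,\alpha_{n-1}(a_{2n-1}))$. *)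

From HB Require Import structures.
From mathcomp Require Import all_boot all_order all_algebra.
Set Implicit Arguments. Unset Strict Implicit. Unset Printing Implicit Defensive.
Import GRing.Theory.
Local Open Scope ring_scope.

Definition upd (V : Type) (n : nat) (x : 'I_n -> V) (i : 'I_n) (v : V) : 'I_n -> V :=
  fun j => if j == i then v else x j.

Definition multilinear (K : fieldType) (V : lmodType K) (n : nat)
  (mu : ('I_n -> V) -> V) : Prop :=
  forall (x : 'I_n -> V) (i : 'I_n) (c : K) (y z : V),
    mu (upd x i (c *: y + z)) = c *: mu (upd x i y) + mu (upd x i z).

Definition linmap (K : fieldType) (V : lmodType K) (f : V -> V) : Prop :=
  forall (c : K) (y z : V), f (c *: y + z) = c *: f y + f z.

(* Bracket placed at 0-indexed position p among the n outer slots, with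
   twisting maps alphas 0 .. n-2 (paper's alpha_1 .. alpha_{n-1}) applied, in
   order, to the outer entries; a is the list a_1 .. a_{2n-1} (0-indexed). *)
Definition bracket_at (V : Type) (n : nat) (mu : ('I_n -> V) -> V)
  (alphas : nat -> V -> V) (p : nat) (a : nat -> V) : V :=
  mu (fun j : 'I_n =>
        if (j < p)%N then alphas j (a j)
        else if (j == p :> nat) then mu (fun l : 'I_n => a (p + l)%N)
        else alphas j.-1 (a (j + n.-1)%N)).

(* n-ary totally Hom-associative: for paper's i in {1..n-1}, i.e. p = i-1 in
   {0..n-2}, the bracket at position p equals the bracket at position p+1. *)
Definition totally_hom_assoc (V : Type) (n : nat) (mu : ('I_n -> V) -> V)
  (alphas : nat -> V -> V) : Prop :=
  forall (p : nat), (p.+1 < n)%N -> forall a : nat -> V,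
    bracket_at mu alphas p a = bracket_at mu alphas p.+1 a.

Definition multiplicative_op (V : Type) (n : nat) (mu : ('I_n -> V) -> V)
  (alpha : V -> V) : Prop :=
  forall x : 'I_n -> V, alpha (mu x) = mu (fun j => alpha (x j)).

Definition mult_nary_THA (K : fieldType) (V : lmodType K) (n : nat)
  (mu : ('I_n -> V) -> V) (alpha : V -> V) : Prop :=
  [/\ multilinear mu, linmap alpha, multiplicative_op mu alpha
    & totally_hom_assoc mu (fun _ => alpha)].

From mathcomp Require Import all_boot all_order all_algebra.
From Stdlib Require Import FunctionalExtensionality.
Local Open Scope ring_scope.

(* Since alpha^m commutes with mu, every bracket of the twisted algebra
   (alpha^m o mu, alpha^(m+1)) is alpha^m applied to the corresponding bracket
   of (mu, alpha) evaluated at the arguments alpha^m a_i; total Hom-associativity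
   therefore transfers, for every m.  The corollary is the case m = 2^k - 1. *)

Lemma multiplicative_op_iter (V : Type) (n : nat) (mu : ('I_n -> V) -> V)
    (alpha : V -> V) :
  multiplicative_op mu alpha -> forall m, multiplicative_op mu (iter m alpha).
Proof. by move=> mu_alpha; elim=> [|m IHm] x //=; rewrite IHm mu_alpha. Qed.

Lemma linmap_iter (K : fieldType) (V : lmodType K) (alpha : V -> V) :
  linmap alpha -> forall m, linmap (iter m alpha).
Proof. by move=> lin_alpha; elim=> [|m IHm] c y z //=; rewrite IHm lin_alpha. Qed.

Lemma bracket_at_twist (V : Type) (n : nat) (mu : ('I_n -> V) -> V)
    (alpha : V -> V) (m p : nat) (a : nat -> V) :
  multiplicative_op mu alpha ->
  bracket_at (fun x => iter m alpha (mu x)) (fun _ => iter m.+1 alpha) p a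
  = iter m alpha (bracket_at mu (fun _ => alpha) p (fun i => iter m alpha (a i))).
Proof.
move=> mu_alpha; rewrite /bracket_at; congr (iter m alpha (mu _)).
apply: functional_extensionality => j.
do 2![case: ifP => _ //].
by rewrite multiplicative_op_iter.
Qed.

Lemma mult_nary_THA_twist (K : fieldType) (V : lmodType K) (n : nat)
    (mu : ('I_n -> V) -> V) (alpha : V -> V) (m : nat) :
  mult_nary_THA mu alpha ->
  mult_nary_THA (fun x => iter m alpha (mu x)) (iter m.+1 alpha).
Proof.
case=> mu_lin alpha_lin mu_alpha mu_assoc; split.
- by move=> x i c y z; rewrite mu_lin linmap_iter.
- exact: linmap_iter.
- move=> x; rewrite -iterD !multiplicative_op_iter //.
  by congr mu; apply: functional_extensionality => j; rewrite -iterD addnC.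
- by move=> p lt_p1n a; rewrite !bracket_at_twist // mu_assoc.
Qed.

Theorem corollary2p6 (K : fieldType) (V : lmodType K) (n : nat)
  (mu : ('I_n -> V) -> V) (alpha : V -> V) :
  [pchar K] =i pred0 ->
  (2 <= n)%N ->
  mult_nary_THA mu alpha ->
  forall k : nat,
    mult_nary_THA (fun x => iter (2 ^ k - 1) alpha (mu x)) (iter (2 ^ k) alpha).
Proof.
move=> _ _ THA_mu k.
have pow_succ : (2 ^ k = (2 ^ k - 1).+1)%N by rewrite subn1 prednK // expn_gt0.
by rewrite {2}pow_succ; apply: mult_nary_THA_twist.
Qed.
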